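(* Let $a,b$ be integers with $0<b<a$, let $S=\langle a,a+1,\ldots,a+b\rangle$ with conductor $c$, and let $m\ge 2c$. If $M$ is an $(S,m,r)$-amenable set, then $M-1=\{x-1\mid x\in M\}$ is an $(S,m-1,r)$-amenable set.
   Context: For $x\in S$, $\mathrm D(x)=\{\alpha\in S\mid x-\alpha\in S\}$. The conductor $c$ is the least element of $S$ with $c+n\in S$ for all $n\in\mathbb N$. For $m\ge 2c-1$, a set $M=\{m_1<\cdots<m_r\}\subseteq S$ with $m=m_1$ is $(S,m,r)$-amenable if $\mathrm D(m_i)\cap[m,\infty)\subseteq M$ for all $i$. *)

From mathcomp Require Import all_boot.
Set Implicit Arguments. Unset Strict Implicit. Unset Printing Implicit Defensive.

Inductive interval_sg (a b : nat) : nat -> Prop :=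
| isg0 : interval_sg a b 0
| isgS (x g : nat) : a <= g <= a + b -> interval_sg a b x -> interval_sg a b (x + g).

Definition is_conductor (S : nat -> Prop) (c : nat) : Prop :=
  [/\ S c, (forall n, S (c + n)) &
      (forall c', S c' -> (forall n, S (c' + n)) -> c <= c')].

(* D(x) = { alpha in S | x - alpha in S } (differences taken in Z, so alpha <= x). *)
Definition Dset (S : nat -> Prop) (x alpha : nat) : Prop :=
  [/\ S alpha, alpha <= x & S (x - alpha)].

(* M = {m_1 < ... < m_r} subset of S with m = m_1 (and m >= 2c - 1, c the
   conductor of S) is (S,m,r)-amenable if D(m_i) cap [m, oo) is contained in M. *)
Definition amenable (S : nat -> Prop) (m r : nat) (M : seq nat) : Prop :=
  (forall c, is_conductor S c -> 2 * c <= m + 1) /\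
  [/\ sorted ltn M, size M = r, ohead M = Some m,
      (forall x, x \in M -> S x) &
      (forall x alpha, x \in M -> Dset S x alpha -> m <= alpha -> alpha \in M)].

(* Since 1 is not in S, the conductor c is positive, so m - 1 >= 2c - 1 >= c
   and everything from m - 1 on lies in S.  Hence M - 1 is in S, and any
   alpha >= m - 1 in D(x - 1) gives alpha + 1 in D(x) with alpha + 1 >= m;
   amenability of M puts alpha + 1 in M, i.e. alpha in M - 1. *)

From mathcomp Require Import all_boot zify.

Set Implicit Arguments.
Unset Strict Implicit.
Unset Printing Implicit Defensive.

Lemma conductor_unique (S : nat -> Prop) (c c' : nat) :
  is_conductor S c -> is_conductor S c' -> c = c'.
Proof.
move=> [Sc Sc_up c_min] [Sc' Sc'_up c'_min].
by apply/eqP; rewrite eqn_leq c_min // c'_min.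
Qed.

Lemma conductor_le_mem (S : nat -> Prop) (c y : nat) :
  is_conductor S c -> c <= y -> S y.
Proof. by move=> [_ S_up _] le_cy; rewrite -(subnKC le_cy). Qed.

Lemma conductor_gt0 (S : nat -> Prop) (c : nat) :
  is_conductor S c -> ~ S 1 -> 0 < c.
Proof.
move=> condS S1; rewrite lt0n; apply/eqP => c0.
by apply: S1; apply: (conductor_le_mem condS); rewrite c0.
Qed.

Lemma interval_sg_gap (a b x : nat) :
  1 < a -> interval_sg a b x -> x = 0 \/ a <= x.
Proof.
by move=> a_gt1; elim=> [|y g /andP[le_ag _] _ _]; [left | right; lia].
Qed.

Lemma interval_sg_not1 (a b : nat) : 1 < a -> ~ interval_sg a b 1.
Proof. by move=> a_gt1 /(interval_sg_gap a_gt1); lia. Qed.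

Lemma sorted_ltn_map_subn1 (s : seq nat) :
  all (leq 1) s -> sorted ltn s -> sorted ltn [seq x - 1 | x <- s].
Proof.
move=> s_gt0 s_sorted; rewrite sorted_map.
by apply: (sub_in_sorted _ s_gt0 s_sorted) => x y /= x_gt0 y_gt0; lia.
Qed.

Lemma sorted_ltn_head_le (m x : nat) (s : seq nat) :
  sorted ltn (m :: s) -> x \in m :: s -> m <= x.
Proof.
move=> /= path_ms; rewrite inE => /predU1P[-> // | x_in_s].
by apply: ltnW; apply: (allP (order_path_min ltn_trans path_ms)).
Qed.

Lemma amenable_head_le (S : nat -> Prop) (m r x : nat) (M : seq nat) :
  amenable S m r M -> x \in M -> m <= x.
Proof.
case: M => [|m0 t] [_ [M_sorted _ head_M _ _]] //.
by case: head_M => <-; apply: sorted_ltn_head_le.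
Qed.

Lemma amenable_shift (S : nat -> Prop) (c m r : nat) (M : seq nat) :
  is_conductor S c -> 0 < c -> 2 * c <= m ->
  amenable S m r M -> amenable S (m - 1) r [seq x - 1 | x <- M].
Proof.
move=> condS c_gt0 le_2c_m amM.
have M_ge x : x \in M -> m <= x by apply: amenable_head_le amM.
have inS y : c <= y -> S y by apply: conductor_le_mem.
case: amM => _ [M_sorted size_M head_M _ M_closed].
split=> [c' condS' | ].
  by rewrite -(conductor_unique condS condS'); lia.
split.
- apply: sorted_ltn_map_subn1 => //.
  by apply/allP => x /M_ge; lia.
- by rewrite size_map.
- by case: M head_M {M_ge M_sorted size_M M_closed} => [|x t] //= [->].
- by move=> _ /mapP[x /M_ge le_mx ->]; apply: inS; lia.
- move=> _ alpha /mapP[x x_in_M ->] [_ le_alpha_x S_diff] le_m_alpha.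
  have le_mx := M_ge x x_in_M.
  apply/mapP; exists alpha.+1; last by rewrite subn1.
  apply: (M_closed x) => //; last by lia.
  split; [by apply: inS; lia | by lia |].
  by rewrite subnS -subn1 subnAC.
Qed.

Theorem lemma4p21 (a b c m r : nat) (M : seq nat) :
  0 < b -> b < a ->
  is_conductor (interval_sg a b) c ->
  2 * c <= m ->
  amenable (interval_sg a b) m r M ->
  amenable (interval_sg a b) (m - 1) r [seq x - 1 | x <- M].
Proof.
move=> b_gt0 lt_ba condS le_2c_m.
apply: (amenable_shift condS) => //.
by apply: (conductor_gt0 condS); apply: interval_sg_not1; lia.
Qed.
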